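(* Let $q$ be a prime power, $k,b,t$ positive integers and $f:\mathbb{F}_q^k\to\mathrm{Im}(f)$ a function with image $\mathrm{Im}(f)=\{f_1,\ldots,f_E\}$. Then \[ r_b^f(k,t)\le N_b\big(\boldsymbol{B}_f^{(2)}(t,f_1,\ldots,f_E)\big). \]
   Context: For $\boldsymbol{z}=(z_0,\ldots,z_{n-1})\in\mathbb{F}_q^n$, the $b$-symbol distance $d_b(\boldsymbol{z},\boldsymbol{w})$ is the number of $i\in\{0,\ldots,n-1\}$ with $(z_i,\ldots,z_{i+b-1})\neq(w_i,\ldots,w_{i+b-1})$ (indices mod $n$). A systematic encoding $\mathrm{Enc}(\boldsymbol{x})=(\boldsymbol{x},p(\boldsymbol{x}))\in\mathbb{F}_q^{k+r}$ is a function-correcting $b$-symbol code for $f$ if $d_b(\mathrm{Enc}(\boldsymbol{x}_1),\mathrm{Enc}(\boldsymbol{x}_2))\ge 2t+1$ whenever $f(\boldsymbol{x}_1)\ne f(\boldsymbol{x}_2)$; $r_b^f(k,t)$ is the smallest $r$ for which one exists. For an $M\times M$ nonnegative integer matrix $\boldsymbol{B}$, $N_b(\boldsymbol{B})$ is the smallest $r$ such that there exist $\boldsymbol{p}_1,\ldots,\boldsymbol{p}_M\in\mathbb{F}_q^r$ (in some ordering) with $d_b(\boldsymbol{p}_i,\boldsymbol{p}_j)\ge[\boldsymbol{B}]_{ij}$ for all $i,j$. The $b$-symbol distance between function values is $d_b^f(f_i,f_j)=\min\{d_b(\boldsymbol{x}_1,\boldsymbol{x}_2):\boldsymbol{x}_1,\boldsymbol{x}_2\in\mathbb{F}_q^k,\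 f(\boldsymbol{x}_1)=f_i,\ f(\boldsymbol{x}_2)=f_j\}$. The $E\times E$ matrix $\boldsymbol{B}_f^{(2)}(t,f_1,\ldots,f_E)$ has entries $\max\{2t+b-d_b^f(f_i,f_j),0\}$ for $i\ne j$ and $0$ on the diagonal. *)

From HB Require Import structures.
From mathcomp Require Import all_boot all_order all_algebra.
Set Implicit Arguments. Unset Strict Implicit. Unset Printing Implicit Defensive.

Definition cshift (n : nat) (i : 'I_n) (l : nat) : 'I_n :=
  Ordinal (ltn_pmod (i + l) (leq_ltn_trans (leq0n i) (ltn_ord i))).

Definition db (F : finFieldType) (b n : nat) (z w : 'rV[F]_n) : nat :=
  #|[set i : 'I_n | [exists l : 'I_b, z ord0 (cshift i l) != w ord0 (cshift i l)]]|.

(* Systematic encoding x |-> (x, p x) is a function-correcting b-symbol code for f. *)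
Definition is_FCbSC (F : finFieldType) (Y : eqType) (k b t r : nat)
  (f : 'rV[F]_k -> Y) (p : 'rV[F]_k -> 'rV[F]_r) : Prop :=
  forall x1 x2 : 'rV[F]_k, f x1 != f x2 ->
    (2 * t + 1 <= db b (row_mx x1 (p x1)) (row_mx x2 (p x2)))%N.

Definition rb_feasible (F : finFieldType) (Y : eqType) (k b t : nat)
  (f : 'rV[F]_k -> Y) (r : nat) : Prop :=
  exists p : 'rV[F]_k -> 'rV[F]_r, is_FCbSC b t f p.

Definition Nb_feasible (F : finFieldType) (M b : nat) (B : 'M[nat]_M) (r : nat) : Prop :=
  exists p : 'I_M -> 'rV[F]_r, forall i j : 'I_M, (B i j <= db b (p i) (p j))%N.

Definition is_least (P : nat -> Prop) (n : nat) : Prop :=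
  P n /\ forall m, P m -> (n <= m)%N.

(* d_b^f(a, c) = min { d_b(x1,x2) : f x1 = a, f x2 = c }.  The default value k of
   the iterated minn is harmless: d_b on F^k is always <= k and, for a, c in the
   image of f, the ranges are nonempty. *)
Definition dbf (F : finFieldType) (Y : eqType) (k b : nat) (f : 'rV[F]_k -> Y)
  (a c : Y) : nat :=
  \big[minn/k]_(x1 : 'rV[F]_k | f x1 == a) \big[minn/k]_(x2 : 'rV[F]_k | f x2 == c)
     db b x1 x2.

(* B_f^(2)(t, f_1, ..., f_E): entries max(2t + b - d_b^f(f_i,f_j), 0) off the
   diagonal (truncated nat subtraction), 0 on the diagonal. *)
Definition Bf2 (F : finFieldType) (Y : eqType) (k b t E : nat) (f : 'rV[F]_k -> Y)
  (fs : 'I_E -> Y) : 'M[nat]_E :=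
  \matrix_(i < E, j < E) (if i == j then 0 else (2 * t + b) - dbf b f (fs i) (fs j))%N.

From HB Require Import structures.
From mathcomp Require Import all_boot all_order all_algebra.
From mathcomp Require Import zify.
From Stdlib Require Import Classical.

Set Implicit Arguments. Unset Strict Implicit. Unset Printing Implicit Defensive.

Import Order.TTheory.

(* The b-symbol distance of two words is the b-weight of the cyclic 0/1 word of positions
   where they differ: the number of cyclic windows of length b containing a 1.  Passing from
   b to b + 1 adds one window for every "edge", a run of b zeros followed by a 1, so the
   b-weight is a sum of edge counts.  For the cyclic concatenation of u (period k) and
   v (period r), every edge of u or v that does not wrap around survives; each of u and v
   has at most one wrapping edge, and when both have one the concatenation has an edge
   across a junction.  So each length b' > 0 loses at most one edge, whence
   d_b(x1 p1, x2 p2) >= d_b(x1, x2) + d_b(p1, p2) - (b - 1).  Choosing the redundancy of x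
   to be the point realizing N_b(B) at the index of f(x) then gives
   d_b >= d_b^f + (2t + b - d_b^f) - (b - 1) = 2t + 1. *)

Lemma count_le1 (T : eqType) (a : pred T) s :
  uniq s -> {in s &, forall x y, a x -> a y -> x = y} -> count a s <= 1.
Proof.
move=> s_uniq a_unique; case: (boolP (has a s)) => [/hasP[x xs ax] |]; last first.
  by rewrite has_count -leqNgt => /leq_trans->.
rewrite (@eq_in_count _ _ (pred1 x)) ?count_uniq_mem ?leq_b1 // => y ys /=.
by apply/idP/eqP => [ay | ->]; [apply: a_unique | ].
Qed.

Lemma count_split (T : Type) (P a : pred T) s :
  count a s = count (fun x => P x && a x) s + count (fun x => ~~ P x && a x) s.
Proof. by elim: s => //= x s ->; case: (P x); case: (a x) => /=; lia. Qed.

Lemma card_ord_count n (P : pred nat) : #|[set i : 'I_n | P i]| = count P (iota 0 n).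
Proof.
rewrite cardsE cardE /enum_mem size_filter -enumT -val_enum_ord count_map.
by apply: eq_count => i.
Qed.

Definition periodic (n : nat) (u : nat -> bool) : Prop := forall j, u (j + n) = u j.

Definition window_nz (b : nat) (u : nat -> bool) (i : nat) : bool :=
  has (fun l => u (i + l)) (iota 0 b).

Definition bweight (n b : nat) (u : nat -> bool) : nat :=
  count (window_nz b u) (iota 0 n).

Definition zero_window_edge (b : nat) (u : nat -> bool) (i : nat) : bool :=
  ~~ window_nz b u i && u (i + b).

Lemma window_nzPn b u i :
  reflect (forall m, i <= m < i + b -> u m = false) (~~ window_nz b u i).
Proof.
apply: (iffP hasPn) => [zero m /andP[im mib] | zero l].
  by apply/negbTE; rewrite -(subnKC im); apply: zero; rewrite mem_iota; lia.
by rewrite mem_iota => /andP[_ lb]; apply/negbT/zero; lia.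
Qed.

Lemma zero_window_edgeP b u i :
  reflect ((forall m, i <= m < i + b -> u m = false) /\ u (i + b)) (zero_window_edge b u i).
Proof. by apply: (iffP andP) => -[/window_nzPn zero one]; split => //; apply/window_nzPn. Qed.

Lemma bweight0 n u : bweight n 0 u = 0.
Proof. exact: count_pred0. Qed.

Lemma bweightS n b u :
  bweight n b.+1 u = bweight n b u + count (zero_window_edge b u) (iota 0 n).
Proof.
have windowS i : window_nz b.+1 u i = window_nz b u i || u (i + b).
  by rewrite /window_nz -addn1 iotaD has_cat /= orbF.
rewrite /bweight (eq_count windowS) /zero_window_edge.
elim: (iota 0 n) => //= i s ->; case: (window_nz b u i); case: (u (i + b)) => /=; lia.
Qed.

Lemma eq_bweight n b u v : u =1 v -> bweight n b u = bweight n b v.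
Proof. by move=> uv; apply: eq_count => i; apply: eq_has => l; rewrite /= uv. Qed.

Lemma wrapping_edges_le n b u :
  count (fun i => ~~ (i + b < n) && zero_window_edge b u i) (iota 0 n) <= (0 < b).
Proof.
have [-> | b_gt0] := posnP b.
  rewrite (@eq_in_count _ _ pred0) ?count_pred0 // => i.
  by rewrite mem_iota addn0 => /andP[_ ->].
apply: count_le1 (iota_uniq 0 n) _ => x y; rewrite !mem_iota /= => xn yn.
case/andP=> wx /zero_window_edgeP[zx ex]; case/andP=> wy /zero_window_edgeP[zy ey].
have edge_unique i j : i < j < n -> n <= i + b -> u (i + b) ->
    (forall m, j <= m < j + b -> u m = false) -> False.
  by move=> ijn ib ui zj; move: ui; rewrite zj //; lia.
case: (ltngtP x y) => // [xy | yx].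
  by case: (edge_unique x y) => //; lia.
by case: (edge_unique y x) => //; lia.
Qed.

Lemma edge_lt_period n b u i :
  0 < n -> periodic n u -> zero_window_edge b u i -> b < n.
Proof.
move=> n_gt0 u_per /zero_window_edgeP[zero one]; rewrite ltnNge; apply/negP => nb.
have shift : i + b = i + (b - n) + n by lia.
by move: one; rewrite shift u_per zero //; lia.
Qed.

Definition catp (k r : nat) (u v : nat -> bool) (j : nat) : bool :=
  let j' := j %% (k + r) in if j' < k then u j' else v (j' - k).

Section Concatenation.

Variables (k r : nat) (u v : nat -> bool).
Local Notation c := (catp k r u v).

Lemma catp_periodic : periodic (k + r) c.
Proof. by move=> j; rewrite /catp modnDr. Qed.

Lemma catpL j : j < k -> c j = u j.
Proof. by move=> jk; rewrite /catp modn_small ?jk // ltn_addr. Qed.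

Lemma catpR j : j < r -> c (k + j) = v j.
Proof. by move=> jr; rewrite /catp modn_small ?ltn_add2l // ltnNge leq_addr addKn. Qed.

Lemma edge_catpL b i : i + b < k -> zero_window_edge b c i = zero_window_edge b u i.
Proof.
move=> ibk; rewrite /zero_window_edge catpL //; congr (~~ _ && _).
by apply: eq_in_has => l; rewrite mem_iota /= => lb; rewrite catpL //; lia.
Qed.

Lemma edge_catpR b j : j + b < r -> zero_window_edge b c (k + j) = zero_window_edge b v j.
Proof.
move=> jbr; rewrite /zero_window_edge -addnA catpR //; congr (~~ _ && _).
by apply: eq_in_has => l; rewrite mem_iota /= => lb; rewrite -addnA catpR //; lia.
Qed.

Hypotheses (u_per : periodic k u) (v_per : periodic r v).

Lemma crossing_edge_catp b i1 i2 :
  i1 < k <= i1 + b -> zero_window_edge b u i1 ->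
  i2 < r <= i2 + b -> zero_window_edge b v i2 ->
  exists i, [/\ i < k + r, k <= i + b, k <= i -> k + r <= i + b & zero_window_edge b c i].
Proof.
move=> /andP[i1k ki1b] edge1 /andP[i2r ri2b] edge2.
have bk := edge_lt_period (leq_ltn_trans (leq0n _) i1k) u_per edge1.
have br := edge_lt_period (leq_ltn_trans (leq0n _) i2r) v_per edge2.
case/zero_window_edgeP: edge1 => zero1 one1; case/zero_window_edgeP: edge2 => zero2 one2.
(* The ones ending the wrapping edges sit at i1 + b - k in u and i2 + b - r in v; the new
   edge of c ends at the one preceded by the longer run of zeros. *)
have tail1 m : i1 <= m < k -> c m = false.
  by move=> im; rewrite catpL ?zero1 //; lia.
have tail2 m : k + i2 <= m < k + r -> c m = false.
  by move=> im; rewrite -(subnKC (_ : k <= m)) ?catpR ?zero2 //; lia.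
have head1 m : m < i1 + b - k -> c m = false.
  by move=> me; rewrite catpL; [rewrite -u_per zero1 //; lia | lia].
have head2 m : k <= m < k + (i2 + b - r) -> c m = false.
  move=> im; rewrite -(subnKC (_ : k <= m)) ?catpR; [|lia|lia].
  by rewrite -v_per zero2 //; lia.
have end1 : c (i1 + b - k).
  by rewrite catpL; [rewrite -u_per subnK | lia].
have end2 : c (k + (i2 + b - r)).
  by rewrite catpR; [rewrite -v_per subnK | lia].
have [e21 | e12] := leqP (i2 + b - r) (i1 + b - k).
  exists (i1 + r); split; try lia; apply/zero_window_edgeP; split => [m im|].
    have [mk | km] := ltnP m k; first by apply: tail1; lia.
    have [mn | nm] := ltnP m (k + r); first by apply: tail2; lia.
    by rewrite -(subnK nm) catp_periodic head1 //; lia.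
  by rewrite (_ : i1 + r + b = i1 + b - k + (k + r)) ?catp_periodic //; lia.
exists (i2 + k - r); split; try lia; apply/zero_window_edgeP; split => [m im|].
  by have [mk | km] := ltnP m k; [apply: tail1 | apply: head2]; lia.
by rewrite (_ : i2 + k - r + b = k + (i2 + b - r)) //; lia.
Qed.

Lemma count_edges_catp b :
  count (zero_window_edge b u) (iota 0 k) + count (zero_window_edge b v) (iota 0 r) <=
  count (zero_window_edge b c) (iota 0 (k + r)) + (0 < b).
Proof.
have iota_split : iota 0 (k + r) = iota 0 k ++ map (addn k) (iota 0 r).
  by rewrite iotaD -iotaDl addn0 add0n.
rewrite iota_split count_cat count_map.
rewrite (count_split (fun i => i + b < k) (zero_window_edge b u)).
rewrite (count_split (fun i => i + b < k) (zero_window_edge b c)).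
rewrite (count_split (fun j => j + b < r) (zero_window_edge b v)).
rewrite (count_split (fun j => j + b < r) (preim (addn k) (zero_window_edge b c))) /=.
have -> : count (fun i => (i + b < k) && zero_window_edge b c i) (iota 0 k) =
          count (fun i => (i + b < k) && zero_window_edge b u i) (iota 0 k).
  by apply: eq_count => i; case ibk: (i + b < k); rewrite //= edge_catpL.
have -> : count (fun j => (j + b < r) && zero_window_edge b c (k + j)) (iota 0 r) =
          count (fun j => (j + b < r) && zero_window_edge b v j) (iota 0 r).
  by apply: eq_count => j; case jbr: (j + b < r); rewrite //= edge_catpR.
have wrap_u := wrapping_edges_le k b u; have wrap_v := wrapping_edges_le r b v.
suff crossing :
    0 < count (fun i => ~~ (i + b < k) && zero_window_edge b u i) (iota 0 k) ->
    0 < count (fun j => ~~ (j + b < r) && zero_window_edge b v j) (iota 0 r) ->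
    0 < count (fun i => ~~ (i + b < k) && zero_window_edge b c i) (iota 0 k) +
        count (fun j => ~~ (j + b < r) && zero_window_edge b c (k + j)) (iota 0 r).
  by move: crossing wrap_u wrap_v; case: (0 < b) => /=; lia.
rewrite -!has_count => /hasP[i1 + /andP[wrap1 edge1]] /hasP[i2 + /andP[wrap2 edge2]].
rewrite !mem_iota /= => i1k i2r.
have [i [ikr kib ki edge]] :=
  crossing_edge_catp (b := b) (i1 := i1) (i2 := i2) ltac:(lia) edge1 ltac:(lia) edge2.
rewrite addn_gt0 -!has_count; apply/orP; have [ik | ki'] := ltnP i k.
  by left; apply/hasP; exists i; rewrite ?mem_iota ?edge; lia.
by right; apply/hasP; exists (i - k); rewrite ?mem_iota ?subnKC ?edge; lia.
Qed.

Lemma bweight_catp b : bweight k b u + bweight r b v <= bweight (k + r) b c + b.-1.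
Proof.
elim: b => [|b IH]; first by rewrite !bweight0.
by rewrite !bweightS; have := count_edges_catp b; lia.
Qed.

End Concatenation.

Section Mismatch.

Variable F : finFieldType.

Definition mismatch n (z w : 'rV[F]_n) (j : nat) : bool :=
  if insub (j %% n) is Some o then z ord0 o != w ord0 o else false.

Lemma mismatch_periodic n (z w : 'rV[F]_n) : periodic n (mismatch z w).
Proof. by move=> j; rewrite /mismatch modnDr. Qed.

Lemma mismatch_cshift n (z w : 'rV[F]_n) (i : 'I_n) l :
  mismatch z w (i + l) = (z ord0 (cshift i l) != w ord0 (cshift i l)).
Proof. by rewrite /mismatch -[(i + l) %% n]/(val (cshift i l)) valK. Qed.

Lemma db_bweight b n (z w : 'rV[F]_n) : db b z w = bweight n b (mismatch z w).
Proof.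
rewrite /db /bweight -card_ord_count; apply: eq_card => i; rewrite !inE.
apply/existsP/hasP => [[l zw] | [l]].
  by exists (val l); rewrite ?mismatch_cshift ?mem_iota /= ?ltn_ord.
by rewrite mem_iota => lb zw; exists (Ordinal lb); rewrite -mismatch_cshift.
Qed.

Lemma mismatch_ord n (z w : 'rV[F]_n) (o : 'I_n) : mismatch z w o = (z ord0 o != w ord0 o).
Proof. by rewrite /mismatch modn_small // valK. Qed.

Lemma mismatch_row_mx k r (x1 x2 : 'rV[F]_k) (p1 p2 : 'rV[F]_r) :
  mismatch (row_mx x1 p1) (row_mx x2 p2) =1 catp k r (mismatch x1 x2) (mismatch p1 p2).
Proof.
move=> j; rewrite /catp {1}/mismatch; case: insubP => [o _ <- | out].
  case: (splitP o) => [o1 | o2] o_val.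
    have -> : o = lshift r o1 by apply: val_inj.
    by rewrite !row_mxEl /= mismatch_ord.
  have -> : o = rshift k o2 by apply: val_inj.
  by rewrite !row_mxEr /= addKn mismatch_ord.
have kr0 : k + r = 0 by move: out; rewrite ltn_mod; lia.
by rewrite ifN /mismatch ?insubF ?ltn_mod //; lia.
Qed.

Lemma db_row_mx b k r (x1 x2 : 'rV[F]_k) (p1 p2 : 'rV[F]_r) :
  db b x1 x2 + db b p1 p2 <= db b (row_mx x1 p1) (row_mx x2 p2) + b.-1.
Proof.
rewrite !db_bweight (eq_bweight _ _ (mismatch_row_mx _ _ _ _)).
exact: bweight_catp (mismatch_periodic _ _) (mismatch_periodic _ _) b.
Qed.

End Mismatch.

Lemma dbf_le (F : finFieldType) (Y : eqType) k b (f : 'rV[F]_k -> Y) x1 x2 :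
  dbf b f (f x1) (f x2) <= db b x1 x2.
Proof.
rewrite /dbf -minEnat.
apply: leq_trans (bigmin_le_cond (T := nat) _ _ (eqxx (f x1))) _.
exact: (bigmin_le_cond (T := nat) _ _ (eqxx (f x2))).
Qed.

Lemma rb_feasible_of_Nb_feasible (F : finFieldType) (Y : eqType) (k b t E r : nat)
    (f : 'rV[F]_k -> Y) (fs : 'I_E -> Y) :
  0 < b -> (forall x, exists i, fs i = f x) ->
  Nb_feasible F b (Bf2 b t f fs) r -> rb_feasible b t f r.
Proof.
move=> b_gt0 fs_onto [p p_dist].
have [g gK] := fin_all_exists fs_onto.
exists (p \o g) => x1 x2 fx12 /=.
have g12 : g x1 != g x2 by apply: contra fx12 => /eqP g12; rewrite -!gK g12.
have := p_dist (g x1) (g x2); rewrite /Bf2 mxE (negbTE g12) !gK.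
by have := dbf_le b f x1 x2; have := db_row_mx b x1 x2 (p (g x1)) (p (g x2)); lia.
Qed.

Lemma is_least_exists (P : nat -> Prop) n : P n -> exists m, is_least P m /\ m <= n.
Proof.
elim/ltn_ind: n => n IH Pn.
have [[m [mn Pm]] | no_smaller] := classic (exists m, m < n /\ P m).
  by have [l [l_least lm]] := IH m mn Pm; exists l; split; last exact: leq_trans lm (ltnW mn).
exists n; split => //; split => // m Pm; rewrite leqNgt; apply/negP => mn.
by apply: no_smaller; exists m.
Qed.

Theorem mainTheorem3 (F : finFieldType) (Y : eqType) (k b t E : nat)
  (hk : (0 < k)%N) (hb : (0 < b)%N) (ht : (0 < t)%N)
  (f : 'rV[F]_k -> Y) (fs : 'I_E -> Y)
  (fs_inj : injective fs)
  (fs_im : forall y : Y, (exists x : 'rV[F]_k, f x = y) <-> (exists i : 'I_E, fs i = y))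
  (N : nat) (hN : is_least (Nb_feasible F b (Bf2 b t f fs)) N) :
  exists R : nat, is_least (rb_feasible b t f) R /\ (R <= N)%N.
Proof.
have [feasible_N _] := hN.
have fs_onto x : exists i, fs i = f x by apply/fs_im; exists x.
exact: is_least_exists (rb_feasible_of_Nb_feasible hb fs_onto feasible_N).
Qed.
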